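(* Let $X$ and $Y$ be locally compact paracompact Hausdorff spaces, let $\varepsilon$ be a coarsely connected proper coarse structure on $X$ and $\zeta$ a coarsely connected proper coarse structure on $Y$. Let $\pi: Y \to X$ be a coarse equivalence with quasi-inverse $\varpi: X \to Y$. If $\pi$ and $\varpi$ are continuous, then the categories $\mathrm{Pers}(\varepsilon)$ and $\mathrm{Pers}(\zeta)$ are isomorphic.
   Context: Artin–Wraith glueing: for topological spaces $A,B$, $\mathrm{Closed}(A)$ is the set of closed subsets of $A$. A map $f:\mathrm{Closed}(A)\to\mathrm{Closed}(B)$ is admissible if $f(\emptyset)=\emptyset$ and $f(F_1\cup F_2)=f(F_1)\cup f(F_2)$. For admissible $f$, $A+_fB$ is the set $A\sqcup B$ with the topology whose closed sets are those $D$ with $D\cap A$ closed in $A$, $D\cap B$ closed in $B$ and $f(D\cap A)\subseteq D$. For a locally compact Hausdorff space $X$, $\mathrm{Comp}(X)$ is the category whose objects are compact spaces $X+_fW$ with $W$ compact Hausdorff and $f$ admissible, and whose morphisms are continuous maps restricting to the identity on $X$. Coarse structures (Roe): a coarse structure on a set $X$ is a family $\varepsilon$ of subsets of $X\times X$ containing the diagonal and closed under subsets, finite unions, inverses $e^{-1}=\{(a,b):(b,a)\in e\}$ and compositions $e'\circ e=\{(a,b):\exists c,\,(a,c)\in e,(c,b)\in e'\}$. $B\subseteq X$ is bounded if $B\times B\in\varepsilon$. $(X,\varepsilon)$ is proper if $\varepsilon$ contains a neighbourhood of the diagonal and every bounded set has compact closure; coarsely connected if every singleton $\{(x,y)\}$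 lies in $\varepsilon$. A map $h:(X,\varepsilon)\to(Y,\zeta)$ is coarse if $(h\times h)(e)\in\zeta$ for all $e\in\varepsilon$ and preimages of bounded sets are bounded. Maps $h,h':S\to X$ are close if $\{(h(s),h'(s)):s\in S\}\in\varepsilon$. A coarse equivalence is a coarse map $\pi$ with a coarse map $\varpi$ (quasi-inverse) such that $\pi\circ\varpi$ and $\varpi\circ\pi$ are close to the identities. Perspectivity: if $X$ is locally compact paracompact Hausdorff and $X+_fW$ is a Hausdorff compactification of $X$ (compact Hausdorff, $X$ a dense subspace), a set $e\subseteq X\times X$ is perspective if $\mathrm{Cl}_{(X+_fW)^2}(e)\cap\big((X+_fW)^2- X^2\big)\subseteq\{(p,p):p\in W\}$; $\varepsilon_f$ denotes the set of perspective subsets. For a coarse structure $\varepsilon$ on $X$, such a compactification is perspective if $\varepsilon\subseteq\varepsilon_f$; $\mathrm{Pers}(\varepsilon)$ is the full subcategory of $\mathrm{Comp}(X)$ whose objects are the perspective compactifications of $(X,\varepsilon)$. *)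

From HB Require Import structures.
From mathcomp Require Import all_boot all_classical all_reals topology.
Set Implicit Arguments. Unset Strict Implicit. Unset Printing Implicit Defensive.
Local Open Scope classical_set_scope.

Definition paracompact (T : topologicalType) :=
  forall U : set (set T), (forall O, U O -> open O) -> \bigcup_(O in U) O = setT ->
  exists V : set (set T),
    [/\ (forall O, V O -> open O), \bigcup_(O in V) O = setT,
        (forall O, V O -> exists2 O', U O' & O `<=` O') &
        (forall x : T, exists2 N, nbhs x N &
           finite_set [set O | V O /\ O `&` N !=set0])].

Definition Closed (T : topologicalType) := {F : set T | closed F}.

Definition closed_set0 (T : topologicalType) : Closed T :=
  exist _ set0 closed0.
Definition closed_setU (T : topologicalType) (F1 F2 : Closed T) : Closed T :=
  exist _ (sval F1 `|` sval F2) (closedU (svalP F1) (svalP F2)).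

Record admissible_map (A B : topologicalType) := AdmissibleMap {
  amap :> Closed A -> Closed B;
  amap0 : sval (amap (closed_set0 A)) = set0;
  amapU : forall F1 F2 : Closed A,
    sval (amap (closed_setU F1 F2)) = sval (amap F1) `|` sval (amap F2) }.

(** extension of an admissible map to all subsets (value on non-closed sets
    is irrelevant and set to the empty set) *)
Definition admext (A B : topologicalType) (f : admissible_map A B)
   (F : set A) : set B :=
  match pselect (closed F) with
  | left h => sval (f (exist _ F h))
  | right _ => set0
  end.

Lemma admextE (A B : topologicalType) (f : admissible_map A B) (F : set A)
  (h : closed F) : admext f F = sval (f (exist _ F h)).
Proof.
rewrite /admext; case: pselect => [h'|//].
by rewrite (Prop_irrelevance h h').
Qed.

Lemma admext0 (A B : topologicalType) (f : admissible_map A B) :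
  admext f set0 = set0.
Proof. by rewrite (admextE _ closed0) -(amap0 f). Qed.

Lemma admextU (A B : topologicalType) (f : admissible_map A B) (F G : set A) :
  closed F -> closed G -> admext f (F `|` G) = admext f F `|` admext f G.
Proof.
move=> hF hG; rewrite (admextE _ hF) (admextE _ hG) (admextE _ (closedU hF hG)).
have := amapU f (exist _ F hF) (exist _ G hG); rewrite /closed_setU /=.
by rewrite (Prop_irrelevance (closedU hF hG) (closedU (svalP (exist closed F hF)) (svalP (exist closed G hG)))).
Qed.

Lemma admext_mono (A B : topologicalType) (f : admissible_map A B) (F G : set A) :
  closed F -> closed G -> F `<=` G -> admext f F `<=` admext f G.
Proof.
move=> hF hG FG; have -> : G = F `|` G by rewrite setUidr.
by rewrite admextU //; apply: subsetUl.
Qed.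

Definition glue_closed (A B : topologicalType) (f : admissible_map A B)
    (D : set (A + B)%type) :=
  [/\ closed (@inl A B @^-1` D), closed (@inr A B @^-1` D) &
      admext f (@inl A B @^-1` D) `<=` @inr A B @^-1` D].

Definition glue_open (A B : topologicalType) (f : admissible_map A B)
    (O : set (A + B)%type) := glue_closed f (~` O).

Lemma glue_openT (A B : topologicalType) (f : admissible_map A B) :
  glue_open f setT.
Proof.
rewrite /glue_open setCT /glue_closed !preimage_set0; split;
  [exact: closed0|exact: closed0|by rewrite admext0].
Qed.

Lemma glue_openI (A B : topologicalType) (f : admissible_map A B) :
  setI_closed (glue_open f).
Proof.
move=> O1 O2 [c1 d1 e1] [c2 d2 e2]; rewrite /glue_open setCI.
rewrite /glue_closed !preimage_setU; split; [exact: closedU|exact: closedU|].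
by rewrite admextU //; apply: setUSS.
Qed.

Lemma glue_open_bigU (A B : topologicalType) (f : admissible_map A B)
  (I : Type) (O : I -> set (A + B)%type) :
  (forall i, glue_open f (O i)) -> glue_open f (\bigcup_i O i).
Proof.
move=> hO; rewrite /glue_open setC_bigcup /glue_closed !preimage_bigcap.
have cl : closed (\bigcap_(i in setT) (@inl A B @^-1` (~` O i))).
  by apply: closed_bigI => i _; have [] := hO i.
split=> //; first by apply: closed_bigI => i _; have [] := hO i.
move=> w hw i _; have [ci _ ei] := hO i; apply: ei.
by apply: (admext_mono cl ci) hw => x; apply.
Qed.

Definition glue (A B : topologicalType) (f : admissible_map A B) : Type :=
  (A + B)%type.

HB.instance Definition _ (A B : topologicalType) (f : admissible_map A B) :=
  Choice.on (glue f).
HB.instance Definition _ (A B : topologicalType) (f : admissible_map A B) :=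
  isOpenTopological.Build (glue f) (glue_openT f) (@glue_openI _ _ f)
    (@glue_open_bigU _ _ f).

Definition gl_inl (A B : topologicalType) (f : admissible_map A B) : A -> glue f :=
  @inl A B.
Definition gl_inr (A B : topologicalType) (f : admissible_map A B) : B -> glue f :=
  @inr A B.

Record CompObj (X : topologicalType) := MkCompObj {
  cW : topologicalType;
  cW_hausdorff : hausdorff_space cW;
  cW_compact : compact [set: cW];
  cf : admissible_map X cW;
  c_compact : compact [set: glue cf] }.

Definition cspace (X : topologicalType) (A : CompObj X) : topologicalType :=
  glue (cf A).

Definition CompHom (X : topologicalType) (A B : CompObj X) :=
  {phi : cspace A -> cspace B |
     continuous phi /\ forall x : X, phi (gl_inl (cf A) x) = gl_inl (cf B) x}.

Definition perspective (X : topologicalType) (A : CompObj X) (e : set (X * X)) :=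
  forall p q : cspace A,
    closure ((fun ab : X * X => (gl_inl (cf A) ab.1, gl_inl (cf A) ab.2)) @` e)
      (p, q) ->
    ~ ((exists a, p = gl_inl (cf A) a) /\ (exists b, q = gl_inl (cf A) b)) ->
    exists w, p = gl_inr (cf A) w /\ q = gl_inr (cf A) w.

(** A is a Hausdorff compactification of X (compactness is part of CompObj)
    and every member of eps is perspective. *)
Definition perspective_compactification (X : topologicalType)
    (eps : set (set (X * X))) (A : CompObj X) :=
  [/\ hausdorff_space (cspace A),
      closure (range (gl_inl (cf A))) = setT &
      forall e, eps e -> perspective A e].

Definition PersObj (X : topologicalType) (eps : set (set (X * X))) :=
  {A : CompObj X | perspective_compactification eps A}.

Definition PersHom (X : topologicalType) (eps : set (set (X * X)))
  (A B : PersObj eps) := CompHom (sval A) (sval B).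

Record PersFunctor (X Y : topologicalType) (eps : set (set (X * X)))
    (zeta : set (set (Y * Y))) := MkPersFunctor {
  fobj : PersObj eps -> PersObj zeta;
  fmor : forall A B, PersHom A B -> PersHom (fobj A) (fobj B);
  fmor_id : forall A (g : PersHom A A), sval g = id -> sval (fmor g) = id;
  fmor_comp : forall A B C (g : PersHom A B) (h : PersHom B C) (k : PersHom A C),
    sval k = sval h \o sval g -> sval (fmor k) = sval (fmor h) \o sval (fmor g) }.

(** Isomorphism of categories: a functor which is a bijection on objects and
    on arrows (equivalently on each hom-set, given bijectivity on objects). *)
Definition pers_isomorphic (X Y : topologicalType) (eps : set (set (X * X)))
    (zeta : set (set (Y * Y))) :=
  exists F : PersFunctor eps zeta,
    bijective (fobj F) /\ forall A B, bijective (@fmor _ _ _ _ F A B).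

Definition diagonal (T : Type) : set (T * T) := [set ab | ab.1 = ab.2].
Definition rel_inv (T : Type) (e : set (T * T)) : set (T * T) :=
  [set ab | e (ab.2, ab.1)].
(** rel_comp e' e = e' o e *)
Definition rel_comp (T : Type) (e' e : set (T * T)) : set (T * T) :=
  [set ab | exists c, e (ab.1, c) /\ e' (c, ab.2)].

Definition coarse_structure (T : Type) (E : set (set (T * T))) :=
  [/\ E (@diagonal T),
      (forall e e', E e -> e' `<=` e -> E e'),
      (forall e e', E e -> E e' -> E (e `|` e')),
      (forall e, E e -> E (rel_inv e)) &
      (forall e e', E e -> E e' -> E (rel_comp e' e))].

Definition coarse_bounded (T : Type) (E : set (set (T * T))) (B : set T) :=
  E (B `*` B).

Definition coarse_proper (T : topologicalType) (E : set (set (T * T))) :=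
  (exists2 e, E e & exists U : set (T * T), [/\ open U, @diagonal T `<=` U & U `<=` e])
  /\ forall B, coarse_bounded E B -> compact (closure B).

Definition coarsely_connected (T : Type) (E : set (set (T * T))) :=
  forall x y : T, E [set (x, y)].

Definition coarse_map (S T : Type) (E : set (set (S * S))) (Z : set (set (T * T)))
    (h : S -> T) :=
  (forall e, E e -> Z ((fun ab : S * S => (h ab.1, h ab.2)) @` e)) /\
  (forall B, coarse_bounded Z B -> coarse_bounded E (h @^-1` B)).

Definition close_maps (S T : Type) (Z : set (set (T * T))) (h h' : S -> T) :=
  Z (range (fun s => (h s, h' s))).

Definition coarse_equivalence (S T : Type) (E : set (set (S * S)))
    (Z : set (set (T * T))) (pi : S -> T) (varpi : T -> S) :=
  [/\ coarse_map E Z pi, coarse_map Z E varpi,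
      close_maps Z (pi \o varpi) id & close_maps E (varpi \o pi) id].

(* Pulling the remainder map back along pi, g(F) = f(cl(pi F)), turns a
   compactification X +_f W into Y +_g W.  The map pi + id : Y +_g W -> X +_f W
   is continuous, and pi is proper (a continuous coarse map between proper
   coarse spaces), so compactness, the Hausdorff property and perspectivity
   pass from X +_f W to Y +_g W.
   As pi o varpi is close to the identity, the relation {(pi (varpi x), x)} is
   perspective, so a closed F and pi (varpi F) have the same limit points in W:
   f(cl(pi(cl(varpi F)))) = f(F), and pulling back along pi and then varpi is
   the identity on objects.
   A morphism of Hausdorff compactifications of a locally compact X maps the
   remainder into the remainder, hence is determined by its restriction to W;
   keeping that restriction and replacing id_X by id_Y gives the functor on
   morphisms, inverted by the same construction along varpi. *)

From Pilot Require Import Defs.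
From HB Require Import structures.
From mathcomp Require Import all_boot all_classical all_reals topology.
Set Implicit Arguments. Unset Strict Implicit. Unset Printing Implicit Defensive.
Local Open Scope classical_set_scope.
Local Notation glue := Defs.glue.

Section Glue.
Variables (A B : topologicalType) (f : admissible_map A B).
Implicit Types (P : set A) (Q : set B).

Lemma glue_closedP (D : set (glue f)) : closed D <-> glue_closed f D.
Proof.
rewrite -openC; change (glue_open f (~` D) <-> glue_closed f D).
by rewrite /glue_open setCK.
Qed.

Lemma admext_closed P : closed (admext f P).
Proof. by rewrite /admext; case: pselect => h; [exact: svalP | exact: closed0]. Qed.

Lemma preimage_inl_glue P Q : @inl A B @^-1` (gl_inl f @` P `|` gl_inr f @` Q) = P.
Proof.
by apply/seteqP; split=> x /=; [case=> [[y Py [<-]]|[y _ //]] | left; exists x].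
Qed.

Lemma preimage_inr_glue P Q : @inr A B @^-1` (gl_inl f @` P `|` gl_inr f @` Q) = Q.
Proof.
by apply/seteqP; split=> x /=; [case=> [[y _ //]|[y Qy [<-]]] | right; exists x].
Qed.

Lemma closed_glue_set P Q : closed P -> closed Q -> admext f P `<=` Q ->
  closed (gl_inl f @` P `|` gl_inr f @` Q).
Proof.
by move=> *; apply/glue_closedP; rewrite /glue_closed preimage_inl_glue preimage_inr_glue.
Qed.

Lemma closure_inl P : closed P ->
  closure (gl_inl f @` P) = gl_inl f @` P `|` gl_inr f @` admext f P.
Proof.
move=> cP; apply/seteqP; split.
  rewrite closureE; apply: smallest_sub; last exact: subsetUl.
  by apply: closed_glue_set => //; exact: admext_closed.
move=> z [Pz|[w Pw <-]]; first exact: subset_closure.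
rewrite closureE => C [/glue_closedP [cCl _ CW] PC]; apply: CW.
by apply: admext_mono cP cCl _ _ Pw => x Px; apply: PC; exists x.
Qed.

Lemma closure_inl_inr P w : closed P ->
  closure (gl_inl f @` P) (gl_inr f w) <-> admext f P w.
Proof.
move=> cP; rewrite closure_inl //; split; last by move=> Pw; right; exists w.
by case=> [[x _ //]|[w' Pw' [<-]]].
Qed.

Lemma dense_inlP : closure (range (gl_inl f)) = setT <-> admext f setT = setT.
Proof.
rewrite closure_inl; last exact: closedT.
split=> [dense|->]; last first.
  by apply/seteqP; split=> // -[x|w] _; [left; exists x|right; exists w].
apply/seteqP; split=> // w _.
have : (range (gl_inl f) `|` gl_inr f @` admext f setT) (gl_inr f w) by rewrite dense.
by case=> [[x _ //]|[w' Pw' [<-]]].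
Qed.

Lemma closed_inr Q : closed Q -> closed (gl_inr f @` Q).
Proof.
move=> cQ; rewrite -[_ @` Q]set0U -(image_set0 (gl_inl f)).
by apply: closed_glue_set; rewrite ?admext0 //; exact: closed0.
Qed.

Lemma open_inl P : open P -> open (gl_inl f @` P).
Proof.
move=> oP; rewrite -closedC.
have -> : ~` (gl_inl f @` P) = gl_inl f @` (~` P) `|` gl_inr f @` setT.
  apply/seteqP; split=> [[x|w] /= nPx|].
  - by left; exists x => // Px; apply: nPx; exists x.
  - by right; exists w.
  - by move=> z [[x nPx <-] [y Py [exy]]|[w _ <-] [y _ //]]; apply: nPx; rewrite -exy.
by apply: closed_glue_set; [rewrite closedC | exact: closedT |].
Qed.

Lemma gl_inl_continuous : continuous (gl_inl f).
Proof. by apply/continuous_closedP => D /glue_closedP []. Qed.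

Lemma gl_inr_continuous : continuous (gl_inr f).
Proof. by apply/continuous_closedP => D /glue_closedP []. Qed.

Lemma nbhs_inl (x : A) (U : set A) : nbhs x U -> nbhs (gl_inl f x) (gl_inl f @` U).
Proof.
rewrite !nbhsE => -[O [oO Ox] OU]; exists (gl_inl f @` O).
  by split; [exact: open_inl | exists x].
exact: image_subset.
Qed.

End Glue.

Section CoarseBounded.
Variables (T : topologicalType) (E : set (set (T * T))).
Hypotheses (csE : coarse_structure E) (cpE : coarse_proper E)
  (ccE : coarsely_connected E).

Lemma coarse_bounded_sub (P Q : set T) :
  coarse_bounded E Q -> P `<=` Q -> coarse_bounded E P.
Proof.
have [_ Esub _ _ _] := csE; move=> EQ PQ; apply: Esub EQ _.
by move=> [x y] [/= /PQ Qx /PQ Qy].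
Qed.

Lemma coarse_bounded0 : coarse_bounded E set0.
Proof. by have [Ediag Esub _ _ _] := csE; apply: Esub Ediag _ => -[x y] []. Qed.

Lemma coarse_boundedU (P Q : set T) :
  coarse_bounded E P -> coarse_bounded E Q -> coarse_bounded E (P `|` Q).
Proof.
have [_ Esub EU Einv Ecomp] := csE.
have [->|/set0P [a Pa]] := eqVneq P set0; first by rewrite set0U.
have [->|/set0P [b Qb]] := eqVneq Q set0; first by rewrite setU0.
move=> EP EQ.
(* P `*` Q lies in the composite of E_P, {(a, b)} and E_Q. *)
have EPQ : E (P `*` Q).
  apply: Esub (Ecomp _ _ (Ecomp _ _ EP (ccE a b)) EQ) _.
  by move=> [x y] [/= Px Qy]; exists b; split=> //; exists a.
have EQP : E (Q `*` P) by apply: Esub (Einv _ EPQ) _ => -[x y] [].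
apply: Esub (EU _ _ (EU _ _ EP EQ) (EU _ _ EPQ EQP)) _.
by move=> [x y] [/= [Px|Qx] [Py|Qy]]; [left; left|right; left|right; right|left; right].
Qed.

Lemma coarse_bounded_nbhs (x : T) : exists2 V, nbhs x V & coarse_bounded E V.
Proof.
have [[e Ee [U [oU dU Ue]]] _] := cpE.
have [[V1 V2] /= [nV1 nV2] VU] : nbhs (x, x) U.
  by apply: open_nbhs_nbhs; split=> //; exact: dU.
exists (V1 `&` V2); first exact: filterI.
have [_ Esub _ _ _] := csE; apply: Esub Ee _.
by move=> [a b] [/= [V1a _] [_ V2b]]; apply/Ue/(VU (a, b)).
Qed.

Lemma compact_coarse_bounded (C : set T) : compact C -> coarse_bounded E C.
Proof.
(* Otherwise the sets C minus a bounded set form a proper filter without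
   cluster point, since every point has a bounded neighbourhood. *)
move=> cC; apply: contrapT => nbC.
pose G := filter_from (coarse_bounded E) (fun B => C `\` B).
have FG : Filter G.
  apply: filter_from_filter; first by exists set0; exact: coarse_bounded0.
  move=> B1 B2 b1 b2; exists (B1 `|` B2); first exact: coarse_boundedU.
  by move=> z [Cz nBz]; split; split=> // ?; apply: nBz; [left|right].
have PG : ProperFilter G.
  apply: filter_from_proper => B bB; apply: contrapT => CB; apply: nbC.
  apply: coarse_bounded_sub bB _ => z Cz; apply: contrapT => nBz; apply: CB.
  by exists z.
have GC : G C by exists set0; [exact: coarse_bounded0 | move=> z []].
have [z [Cz clz]] := cC G PG GC.
have [V nV bV] := coarse_bounded_nbhs z.
have GCV : G (C `\` V) by exists V.
by have [w [[_ nVw] Vw]] := clz _ _ GCV nV.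
Qed.

End CoarseBounded.

Definition proper_map (S T : topologicalType) (h : S -> T) :=
  forall K, compact K -> compact (h @^-1` K).

Lemma continuous_coarse_map_proper (S T : topologicalType)
    (zeta : set (set (S * S))) (eps : set (set (T * T))) (h : S -> T) :
  hausdorff_space T -> coarse_structure eps -> coarse_proper eps ->
  coarsely_connected eps -> coarse_proper zeta ->
  coarse_map zeta eps h -> continuous h -> proper_map h.
Proof.
move=> hT csE cpE ccE [_ bounded_compact] [_ hbounded] ch K cK.
have cK' : closed (h @^-1` K).
  by apply: (continuous_closedP h).1 ch _ (compact_closed hT cK).
rewrite (closure_id (h @^-1` K)).1 //; apply/bounded_compact/hbounded.
exact: compact_coarse_bounded.
Qed.

Lemma image_closure_sub (S T : topologicalType) (h : S -> T) (P : set S) :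
  continuous h -> h @` closure P `<=` closure (h @` P).
Proof.
move=> ch; have cl : closed (h @^-1` closure (h @` P)).
  exact: (continuous_closedP h).1 ch _ (@closed_closure _ _).
have : closure P `<=` h @^-1` closure (h @` P).
  rewrite closureE; apply: smallest_sub => // x Px.
  by apply: subset_closure; exists x.
by move=> sub _ [x /sub ? <-].
Qed.

Lemma closure_image_closure (S T : topologicalType) (h : S -> T) (P : set S) :
  continuous h -> closure (h @` closure P) = closure (h @` P).
Proof.
move=> ch; apply/seteqP; split; last exact/closureS/image_subset/subset_closure.
rewrite [X in _ `<=` X](closure_id _).1; last exact: closed_closure.
exact/closureS/image_closure_sub.
Qed.

Lemma cluster_nbhs_continuous (S T : topologicalType) (h : S -> T) (p q : S) :
  continuous h -> cluster (nbhs p) q -> cluster (nbhs (h p)) (h q).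
Proof.
move=> ch pq U V nU nV.
by have [z [Uz Vz]] := pq _ _ (ch p U nU) (ch q V nV); exists (h z).
Qed.

Lemma filter_meets_compact_cluster (T : topologicalType) (G : set_system T) (K : set T) :
  Filter G -> compact K -> (forall P, G P -> P `&` K !=set0) ->
  exists z, cluster G z.
Proof.
move=> FG cK GK.
have PGK : ProperFilter (within K G).
  apply: Build_ProperFilter_ex => P /GK [z [KPz Kz]].
  by exists z; apply: KPz.
have [z [_ clz]] := cK _ PGK (withinT _ _).
exists z => P Q GP nQ; apply: clz nQ.
by apply: filterS GP => p Pp _.
Qed.

Section Pullback.
Variables (X Y W : topologicalType) (pi : Y -> X) (f : admissible_map X W).

Definition pullback_fun (F : Closed Y) : Closed W :=
  f (exist _ (closure (pi @` sval F)) (@closed_closure X _)).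

Lemma pullback_fun0 : sval (pullback_fun (closed_set0 Y)) = set0.
Proof. by rewrite /pullback_fun -admextE /= image_set0 closure0 admext0. Qed.

Lemma pullback_funU F1 F2 :
  sval (pullback_fun (closed_setU F1 F2)) =
  sval (pullback_fun F1) `|` sval (pullback_fun F2).
Proof.
rewrite /pullback_fun -!admextE /= image_setU closureU admextU //.
all: exact: closed_closure.
Qed.

Definition pullback : admissible_map Y W := AdmissibleMap pullback_fun0 pullback_funU.

Lemma admext_pullback (F : set Y) :
  closed F -> admext pullback F = admext f (closure (pi @` F)).
Proof. by move=> cF; rewrite (admextE _ cF) /= /pullback_fun -admextE. Qed.

Definition pullback_proj (z : glue pullback) : glue f :=
  match z with inl y => gl_inl f (pi y) | inr w => gl_inr f w end.

Lemma pullback_proj_inl z x :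
  pullback_proj z = gl_inl f x -> exists y, z = gl_inl pullback y.
Proof. by case: z => [y|w] // _; exists y. Qed.

Lemma pullback_proj_inr z w : pullback_proj z = gl_inr f w -> z = gl_inr pullback w.
Proof. by case: z => [y|w'] //= [->]. Qed.

Lemma pullback_cluster_inr (G : set_system (glue pullback)) (w : W) :
  Filter G -> cluster (pullback_proj @ G) (gl_inr f w) -> cluster G (gl_inr pullback w).
Proof.
move=> FG; rewrite !clusterE => clw P GP.
have /glue_closedP [clY clW fYW] := @closed_closure _ P.
pose EY := @inl Y W @^-1` closure P; pose EW := @inr Y W @^-1` closure P.
pose Q := gl_inl f @` closure (pi @` EY) `|` gl_inr f @` EW.
have cQ : closed Q.
  apply: closed_glue_set => //; first exact: closed_closure.
  by rewrite -admext_pullback.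
have GQ : G (pullback_proj @^-1` Q).
  apply: filterS GP => -[y|v] Pz /=; [left; exists (pi y) | right; exists v] => //.
    by apply: subset_closure; exists y => //; exact: subset_closure.
  exact: subset_closure.
have := clw _ GQ; rewrite -(closure_id Q).1 // => -[[x _ //]|[v EWv [<-]]].
exact: EWv.
Qed.

Hypotheses (lcX : locally_compact [set: X]) (ppi : proper_map pi).

Lemma pullback_cluster_inl (G : set_system (glue pullback)) (x : X) :
  Filter G -> cluster (pullback_proj @ G) (gl_inl f x) -> exists z, cluster G z.
Proof.
move=> FG clx; have [V nV [cV _]] := lcX (I : setT x); rewrite withinET in nV.
apply: (@filter_meets_compact_cluster _ _ (gl_inl pullback @` (pi @^-1` V))) => //.
  apply: continuous_compact (ppi cV).
  by apply: continuous_subspaceT; exact: gl_inl_continuous.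
move=> P GP; apply: contrapT => /set0P/negP/negPn/eqP PK.
have GnV : G (pullback_proj @^-1` ~` (gl_inl f @` V)).
  apply: filterS GP => -[y|v] Pz [x' Vx'] // [exy].
  suff : (P `&` gl_inl pullback @` (pi @^-1` V)) (inl y) by rewrite PK.
  by split=> //; exists y => //; rewrite /preimage /= -exy.
by have [z [nVz Vz]] := clx _ _ GnV (nbhs_inl f nV); apply: nVz.
Qed.

Lemma pullback_compact : compact [set: glue f] -> compact [set: glue pullback].
Proof.
move=> cf G PG _.
have [[x|w] [_ clz]] := cf _ (fmap_proper_filter pullback_proj PG) filterT.
  by have [z clGz] := pullback_cluster_inl _ clz; exists z.
by exists (gl_inr pullback w); split=> //; exact: pullback_cluster_inr.
Qed.

Hypothesis cpi : continuous pi.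

Lemma pullback_proj_continuous : continuous pullback_proj.
Proof.
apply/continuous_closedP => D /glue_closedP [clX clW fXW]; apply/glue_closedP.
have clY : closed (pi @^-1` (@inl X W @^-1` D)).
  exact: (continuous_closedP pi).1 cpi _ clX.
split=> //; rewrite (admext_pullback clY) => w fw; apply: fXW.
apply: admext_mono fw; [exact: closed_closure | exact: clX |].
rewrite [X in _ `<=` X](closure_id _).1 //.
by apply: closureS => _ [y Dy <-].
Qed.

Lemma pullback_hausdorff :
  hausdorff_space Y -> hausdorff_space (glue f) -> hausdorff_space (glue pullback).
Proof.
move=> hY hf p q cl.
have := hf _ _ (cluster_nbhs_continuous pullback_proj_continuous cl).
case: p q cl => [y1|w1] [y2|w2] cl //=; last by case=> ->.
move=> _; congr inl; apply: hY => U V nU nV.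
have [z [[a Ua ea] [b Vb eb]]] := cl _ _ (nbhs_inl pullback nU) (nbhs_inl pullback nV).
by exists a; split=> //; move: eb; rewrite -ea => -[<-].
Qed.

End Pullback.

Section Perspective.
Variables (X : topologicalType) (A : CompObj X).
Local Notation inlA := (gl_inl (cf A)).
Local Notation inrA := (gl_inr (cf A)).

Lemma perspective_closure_inr (e : set (X * X)) (S P : set X) (w : cW A) :
  perspective A e -> (forall a, S a -> exists2 b, P b & e (a, b)) ->
  closure (inlA @` S) (inrA w) -> closure (inlA @` P) (inrA w).
Proof.
(* The e-partners in P of points of S near w accumulate at some q; then (w, q)
   is a limit of e, so perspectivity forces q = w. *)
move=> pe SPe clS.
pose B N := inlA @` [set b | P b /\ exists a, e (a, b) /\ N (inlA a)].
pose G := filter_from (nbhs (inrA w : cspace A)) B.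
have FG : Filter G.
  apply: filter_from_filter; first by exists setT; exact: filterT.
  move=> N1 N2 nN1 nN2; exists (N1 `&` N2); first exact: filterI.
  move=> _ [b [Pb [a [eab [N1a N2a]]]] <-].
  by split; exists b => //; split=> //; exists a.
have PG : ProperFilter G.
  apply: filter_from_proper => N nN.
  have [_ [[a Sa <-] Na]] := clS N nN; have [b Pb eab] := SPe a Sa.
  by exists (inlA b), b => //; split=> //; exists a.
have [q [_ clq]] := @c_compact _ A G PG filterT.
have clwq : closure ((fun ab : X * X => (inlA ab.1, inlA ab.2)) @` e) (inrA w, q).
  move=> M [[N1 N2] /= [nN1 nN2] NM].
  have GB : G (B N1) by exists N1.
  have [_ [[b [_ [a [eab N1a]]] <-] N2b]] := clq _ _ GB nN2.
  by exists (inlA a, inlA b); split; [exists (a, b) | exact: (NM (_, _))].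
have [w' [ew qw]] : exists w', inrA w = inrA w' /\ q = inrA w'.
  by apply: pe clwq _ => -[[a //]].
rewrite ew -qw.
move=> N nN; have GP : G (inlA @` P).
  by exists setT; [exact: filterT | move=> _ [b [Pb _] <-]; exists b].
by have [z [Pz Nz]] := clq _ _ GP nN; exists z.
Qed.

Lemma admext_closure_close (h : X -> X) (F : set X) : closed F ->
  perspective A (range (fun x => (h x, x))) ->
  perspective A (rel_inv (range (fun x => (h x, x)))) ->
  admext (cf A) (closure (h @` F)) = admext (cf A) F.
Proof.
move=> cF ph ph'; apply/seteqP; split=> w.
all: rewrite -(closure_inl_inr _ _ cF) -(closure_inl_inr _ _ (@closed_closure _ _)).
all: rewrite closure_image_closure; last exact: gl_inl_continuous.
- by apply: perspective_closure_inr ph _ => _ [x Fx <-]; exists x => //; exists x.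
- by apply: perspective_closure_inr ph' _ => x Fx; exists (h x); [exists x | exists x].
Qed.

End Perspective.

Lemma admissible_map_eq (A B : topologicalType) (f g : admissible_map A B) :
  (forall F : Closed A, sval (f F) = sval (g F)) -> f = g.
Proof.
case: f g => f f0 fU [g g0 gU] /= fg.
have efg : f = g.
  by apply/funext => F; apply: eq_sig_hprop (fg F) => *; exact: Prop_irrelevance.
by subst g; congr AdmissibleMap; exact: Prop_irrelevance.
Qed.

Lemma CompObj_eq (X W : topologicalType) (hW : hausdorff_space W) (cW : compact [set: W])
    (f1 f2 : admissible_map X W) c1 c2 :
  f1 = f2 -> @MkCompObj X W hW cW f1 c1 = @MkCompObj X W hW cW f2 c2.
Proof. by move=> e; subst; congr MkCompObj; exact: Prop_irrelevance. Qed.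

Section PullbackPers.
Variables (X Y : topologicalType) (eps : set (set (X * X))) (zeta : set (set (Y * Y))).
Variables (pi : Y -> X) (varpi : X -> Y).
Hypotheses (cpi : continuous pi) (csX : coarse_structure eps)
  (close : close_maps eps (pi \o varpi) id).

Lemma admext_closure_roundtrip (A : CompObj X) :
  (forall e, eps e -> perspective A e) -> forall F, closed F ->
  admext (cf A) (closure (pi @` closure (varpi @` F))) = admext (cf A) F.
Proof.
have [_ _ _ Einv _] := csX.
move=> pA F cF; rewrite closure_image_closure // image_comp.
by apply: admext_closure_close => //; apply: pA => //; exact: Einv.
Qed.

Lemma pullbackK (A : CompObj X) :
  (forall e, eps e -> perspective A e) -> pullback varpi (pullback pi (cf A)) = cf A.
Proof.
move=> pA; apply: admissible_map_eq => -[F cF] /=.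
by rewrite /pullback_fun -!admextE /= admext_closure_roundtrip.
Qed.

Lemma admext_pullback_closure (A : CompObj X) :
  (forall e, eps e -> perspective A e) -> forall F, closed F ->
  admext (cf A) F = admext (pullback pi (cf A)) (closure (varpi @` F)).
Proof.
move=> pA F cF; rewrite admext_pullback; last exact: closed_closure.
by rewrite admext_closure_roundtrip.
Qed.

Lemma pullback_dense (A : CompObj X) : perspective_compactification eps A ->
  closure (range (gl_inl (pullback pi (cf A)))) = setT.
Proof.
move=> [_ /dense_inlP dA pA]; apply/dense_inlP.
rewrite admext_pullback; last exact: closedT.
apply/seteqP; split=> // w _.
have : admext (cf A) (closure (pi @` closure (varpi @` setT))) w.
  by rewrite admext_closure_roundtrip ?dA //; exact: closedT.
apply: admext_mono; [exact: closed_closure | exact: closed_closure |].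
exact/closureS/image_subset.
Qed.

Hypotheses (lcX : locally_compact [set: X]) (ppi : proper_map pi)
  (hY : hausdorff_space Y) (cmpi : coarse_map zeta eps pi).

Definition pullback_obj (A : CompObj X) : CompObj Y :=
  @MkCompObj Y (cW A) (@cW_hausdorff X A) (@cW_compact X A) (pullback pi (cf A))
    (pullback_compact lcX ppi (@c_compact X A)).

Lemma pullback_perspective_compactification (A : CompObj X) :
  perspective_compactification eps A ->
  perspective_compactification zeta (pullback_obj A).
Proof.
move=> PA; have [hA _ pA] := PA; split; first exact: pullback_hausdorff.
  exact: pullback_dense.
move=> e ze p q clpq not_inl.
pose proj := @pullback_proj _ _ _ pi (cf A).
have clproj : closure ((fun ab : X * X => (gl_inl (cf A) ab.1, gl_inl (cf A) ab.2)) @`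
    ((fun ab : Y * Y => (pi ab.1, pi ab.2)) @` e)) (proj p, proj q).
  move=> M [[N1 N2] /= [nN1 nN2] NM].
  have : nbhs (p, q) (proj @^-1` N1 `*` proj @^-1` N2).
    exists (proj @^-1` N1, proj @^-1` N2) => //.
    by split; exact: pullback_proj_continuous.
  move/clpq => [_ [[[a b] eab <-] [N1a N2b]]].
  exists (gl_inl (cf A) (pi a), gl_inl (cf A) (pi b)); split; last exact: (NM (_, _)).
  by exists (pi a, pi b) => //; exists (a, b).
have [|w [pw qw]] := pA _ (cmpi.1 e ze) _ _ clproj.
  by move=> [[a /pullback_proj_inl pa] [b /pullback_proj_inl qb]]; exact: not_inl.
by exists w; split; exact: pullback_proj_inr.
Qed.

Definition pullback_pers (A : PersObj eps) : PersObj zeta :=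
  exist _ (pullback_obj (sval A)) (pullback_perspective_compactification (svalP A)).

End PullbackPers.

Lemma comp_hom_eq (X : topologicalType) (A B : CompObj X) (phi psi : CompHom A B) :
  (forall w, sval phi (gl_inr (cf A) w) = sval psi (gl_inr (cf A) w)) -> phi = psi.
Proof.
move=> phipsi; apply: eq_sig_hprop => [? ? ?|]; first exact: Prop_irrelevance.
apply/funext => -[x|w]; last exact: phipsi.
by rewrite (proj2 (svalP phi) x) (proj2 (svalP psi) x).
Qed.

(* If phi sent w to some x in X, the points of X near w, fixed by phi, would
   lie in a compact neighbourhood V of x; but V is closed and misses w. *)
Lemma comp_hom_inr (X : topologicalType) (A B : CompObj X) :
  locally_compact [set: X] -> hausdorff_space (cspace A) ->
  closure (range (gl_inl (cf A))) = setT ->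
  forall (phi : CompHom A B) (w : cW A),
  exists w', sval phi (gl_inr (cf A) w) = gl_inr (cf B) w'.
Proof.
move=> lcX hA dA [phi [cphi phiX]] w /=.
case phiw: (phi (gl_inr (cf A) w)) => [x|w']; last by exists w'.
have [V nV [cV _]] := lcX x I; rewrite withinET in nV.
have nphiV : nbhs (gl_inr (cf A) w : cspace A) (phi @^-1` (gl_inl (cf B) @` V)).
  by apply: cphi; rewrite phiw; exact: nbhs_inl.
have nnV : nbhs (gl_inr (cf A) w : cspace A) (~` (gl_inl (cf A) @` V)).
  apply: open_nbhs_nbhs; split; last by case.
  rewrite openC; apply: compact_closed hA _.
  by apply: continuous_compact cV; apply: continuous_subspaceT; exact: gl_inl_continuous.
have : closure (range (gl_inl (cf A))) (gl_inr (cf A) w) by rewrite dA.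
move/(_ _ (filterI nphiV nnV)) => -[_ [[x' _ <-] [/= [v Vv ev] nVx]]].
move: ev; rewrite phiX => -[exv].
by exfalso; apply: nVx; exists x'; rewrite -?exv.
Qed.

Section GlueMap.
Variables (X Y : topologicalType) (pi : Y -> X) (A B : CompObj X).
Variables (gA : admissible_map Y (cW A)) (gB : admissible_map Y (cW B)).
Hypotheses (gAE : forall F, closed F -> admext gA F = admext (cf A) (closure (pi @` F)))
  (gBE : forall F, closed F -> admext gB F = admext (cf B) (closure (pi @` F))).

Definition glue_map (h : cW A -> cW B) (z : glue gA) : glue gB :=
  match z with inl y => gl_inl gB y | inr w => gl_inr gB (h w) end.

Variables (phi : CompHom A B) (h : cW A -> cW B).
Hypothesis phih : forall w, sval phi (gl_inr (cf A) w) = gl_inr (cf B) (h w).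

Lemma glue_map_continuous : continuous (glue_map h).
Proof.
have [cphi phiX] := svalP phi.
apply/continuous_closedP => D /glue_closedP [clY clW gBY]; apply/glue_closedP.
split=> //.
  have -> : @inr Y (cW A) @^-1` (glue_map h @^-1` D) =
      gl_inr (cf A) @^-1` (sval phi @^-1` (gl_inr (cf B) @` (@inr Y (cW B) @^-1` D))).
    apply/seteqP; split=> w /=; rewrite phih; first by exists (h w).
    by case=> v Dv [<-].
  apply: (continuous_closedP _).1 (@gl_inr_continuous _ _ (cf A)) _ _.
  by apply: (continuous_closedP _).1 cphi _ _; exact: closed_inr.
set S := closure (pi @` (@inl Y (cW B) @^-1` D)).
have cS : closed S by exact: closed_closure.
have phiS : sval phi @` (gl_inl (cf A) @` S) = gl_inl (cf B) @` S.
  by rewrite image_comp; apply: eq_imagel => x _ /=; exact: phiX.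
rewrite gAE // => w /(closure_inl_inr _ _ cS) clw.
have : closure (sval phi @` (gl_inl (cf A) @` S)) (sval phi (gl_inr (cf A) w)).
  by apply: image_closure_sub cphi _ _; exists (gl_inr (cf A) w).
rewrite phiS phih => /(closure_inl_inr _ _ cS).
by rewrite -gBE //; exact: gBY.
Qed.

Definition glue_hom :
  {psi : glue gA -> glue gB |
    continuous psi /\ forall y, psi (gl_inl gA y) = gl_inl gB y} :=
  exist _ (glue_map h) (conj glue_map_continuous (fun => erefl)).

End GlueMap.

Section Remainder.
Variables (X : topologicalType) (eps : set (set (X * X))).
Hypothesis lcX : locally_compact [set: X].
Implicit Types A B : PersObj eps.

Lemma pers_hausdorff A : hausdorff_space (cspace (sval A)).
Proof. by case: (svalP A). Qed.

Lemma pers_dense A : closure (range (gl_inl (cf (sval A)))) = setT.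
Proof. by case: (svalP A). Qed.

Lemma pers_perspective A : forall e, eps e -> perspective (sval A) e.
Proof. by case: (svalP A). Qed.

Definition remainder_map A B (phi : PersHom A B) (w : cW (sval A)) : cW (sval B) :=
  projT1 (cid (comp_hom_inr lcX (@pers_hausdorff A) (pers_dense A) phi w)).

Lemma remainder_mapE A B (phi : PersHom A B) w :
  sval phi (gl_inr (cf (sval A)) w) = gl_inr (cf (sval B)) (remainder_map phi w).
Proof. by rewrite /remainder_map; case: cid. Qed.

Lemma remainder_map_eq A B (phi : PersHom A B) (h : cW (sval A) -> cW (sval B)) :
  (forall w, sval phi (gl_inr (cf (sval A)) w) = gl_inr (cf (sval B)) (h w)) ->
  remainder_map phi =1 h.
Proof. by move=> phih w; have := remainder_mapE phi w; rewrite phih => -[]. Qed.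

End Remainder.

Section CoarseEquivalence.
Variables (X Y : topologicalType) (eps : set (set (X * X))) (zeta : set (set (Y * Y))).
Variables (pi : Y -> X) (varpi : X -> Y).
Hypotheses (lcX : locally_compact [set: X]) (hX : hausdorff_space X)
  (lcY : locally_compact [set: Y]) (hY : hausdorff_space Y).
Hypotheses (csX : coarse_structure eps) (cpX : coarse_proper eps)
  (ccX : coarsely_connected eps) (csY : coarse_structure zeta)
  (cpY : coarse_proper zeta) (ccY : coarsely_connected zeta).
Hypotheses (cmpi : coarse_map zeta eps pi) (cmvarpi : coarse_map eps zeta varpi)
  (closeX : close_maps eps (pi \o varpi) id) (closeY : close_maps zeta (varpi \o pi) id).
Hypotheses (cpi : continuous pi) (cvarpi : continuous varpi).

Let ppi : proper_map pi := continuous_coarse_map_proper hX csX cpX ccX cpY cmpi cpi.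
Let pvarpi : proper_map varpi :=
  continuous_coarse_map_proper hY csY cpY ccY cpX cmvarpi cvarpi.

Local Notation pullback_pi := (pullback_pers cpi csX closeX lcX ppi hY cmpi).
Local Notation pullback_varpi :=
  (pullback_pers cvarpi csY closeY lcY pvarpi hX cmvarpi).

Lemma pullback_piK : cancel pullback_pi pullback_varpi.
Proof.
move=> [[W hW cptW f cptf] PA].
apply: eq_sig_hprop => [? ? ?|]; first exact: Prop_irrelevance.
apply: CompObj_eq => /=.
by apply: (pullbackK cpi csX closeX (A := @MkCompObj X W hW cptW f cptf)); case: PA.
Qed.

Lemma pullback_varpiK : cancel pullback_varpi pullback_pi.
Proof.
move=> [[W hW cptW f cptf] PB].
apply: eq_sig_hprop => [? ? ?|]; first exact: Prop_irrelevance.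
apply: CompObj_eq => /=.
by apply: (pullbackK cvarpi csY closeY (A := @MkCompObj Y W hW cptW f cptf)); case: PB.
Qed.

Definition pullback_hom (A B : PersObj eps) (phi : PersHom A B) :
    PersHom (pullback_pi A) (pullback_pi B) :=
  glue_hom (@admext_pullback _ _ _ pi (cf (sval A)))
    (@admext_pullback _ _ _ pi (cf (sval B))) (remainder_mapE lcX phi).

Definition unpullback_hom (A B : PersObj eps)
    (psi : PersHom (pullback_pi A) (pullback_pi B)) : PersHom A B :=
  glue_hom (A := sval (pullback_pi A)) (B := sval (pullback_pi B))
    (admext_pullback_closure cpi csX closeX (@pers_perspective _ _ A))
    (admext_pullback_closure cpi csX closeX (@pers_perspective _ _ B))
    (remainder_mapE lcY psi).

Lemma pullback_homK A B : cancel (@pullback_hom A B) (@unpullback_hom A B).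
Proof.
move=> phi; apply: comp_hom_eq => w /=.
rewrite (remainder_map_eq lcY (phi := pullback_hom phi)
  (h := remainder_map lcX phi)) //.
exact: esym (remainder_mapE lcX phi w).
Qed.

Lemma unpullback_homK A B : cancel (@unpullback_hom A B) (@pullback_hom A B).
Proof.
move=> psi; apply: comp_hom_eq => w /=.
rewrite (remainder_map_eq lcX (phi := unpullback_hom psi)
  (h := remainder_map lcY psi)) //.
exact: esym (remainder_mapE lcY psi w).
Qed.

Lemma pullback_hom_id A (g : PersHom A A) : sval g = id -> sval (pullback_hom g) = id.
Proof.
move=> gid; apply/funext => -[y|w] //=; congr inr.
by apply: (remainder_map_eq lcX (h := id)) => v; rewrite gid.
Qed.

Lemma pullback_hom_comp A B C (g : PersHom A B) (h : PersHom B C) (k : PersHom A C) :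
  sval k = sval h \o sval g ->
  sval (pullback_hom k) = sval (pullback_hom h) \o sval (pullback_hom g).
Proof.
move=> khg; apply/funext => -[y|w] //=; congr inr.
apply: (remainder_map_eq lcX (h := remainder_map lcX h \o remainder_map lcX g)) => v.
by rewrite khg /= !remainder_mapE.
Qed.

Definition pullback_functor : PersFunctor eps zeta :=
  MkPersFunctor pullback_hom_id pullback_hom_comp.

Lemma coarse_equivalence_pers_isomorphic : pers_isomorphic eps zeta.
Proof.
exists pullback_functor; split.
  by exists pullback_varpi; [exact: pullback_piK | exact: pullback_varpiK].
move=> A B; exists (@unpullback_hom A B).
  exact: pullback_homK.
exact: unpullback_homK.
Qed.

End CoarseEquivalence.

Theorem mainTheorem1 (X Y : topologicalType)
  (eps : set (set (X * X))) (zeta : set (set (Y * Y)))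
  (pi : Y -> X) (varpi : X -> Y) :
  locally_compact [set: X] -> paracompact X -> hausdorff_space X ->
  locally_compact [set: Y] -> paracompact Y -> hausdorff_space Y ->
  coarse_structure eps -> coarse_proper eps -> coarsely_connected eps ->
  coarse_structure zeta -> coarse_proper zeta -> coarsely_connected zeta ->
  coarse_equivalence zeta eps pi varpi ->
  continuous pi -> continuous varpi ->
  pers_isomorphic eps zeta.
Proof.
move=> lcX _ hX lcY _ hY csX cpX ccX csY cpY ccY [cmpi cmvarpi closeX closeY].
exact: coarse_equivalence_pers_isomorphic.
Qed.
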